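(* Let $k$ be an odd integer with $k\ge 5$, let $D$ be a strong $k$-quasi-transitive digraph with $\mathrm{diam}(D)\ge k+2$, let $u,v\in V(D)$ with $d(u,v)=k+2$, and let $P=x_0x_1\ldots x_{k+2}$ be a shortest $(u,v)$-path with $x_0=u$, $x_{k+2}=v$. Let $O(P)=\{x_1,x_3,\ldots,x_{k+2}\}$ and $E(P)=\{x_0,x_2,\ldots,x_{k+1}\}$. If there exist two distinct vertices $x_i,x_j$ both in $E(P)$ or both in $O(P)$ that are adjacent, then $D[V(P)]$ is a semicomplete digraph and $x_s\rightarrow x_t$ for all indices $0\le t$, $s\le k+2$ with $1\le t+1<s$.
   Context: All digraphs are finite, without loops or multiple arcs (opposite arcs allowed). $x\rightarrow y$ means $xy\in A(D)$; $x,y$ are adjacent if $x\rightarrow y$ or $y\rightarrow x$. For $k\ge 2$, $D$ is $k$-quasi-transitive if for every path $x_0x_1\ldots x_k$ of length $k$, $x_0$ and $x_k$ are adjacent. $d(x,y)$ is the length of a shortest $(x,y)$-path, $\mathrm{diam}(D)=\max_{x,y}d(x,y)$. $D[S]$ is the induced subdigraph. A semicomplete digraph is one in which every two distinct vertices are adjacent. *)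

From mathcomp Require Import all_boot.
Set Implicit Arguments. Unset Strict Implicit. Unset Printing Implicit Defensive.

(* A digraph is a finite vertex type V with an arc relation A : rel V,
   irreflexive (no loops); opposite arcs are allowed. *)

Definition adjacent (V : finType) (A : rel V) (x y : V) : Prop :=
  A x y \/ A y x.

Definition is_path (V : finType) (A : rel V) (y : nat -> V) (n : nat) : Prop :=
  (forall i, i < n -> A (y i) (y i.+1)) /\
  (forall i j, i <= n -> j <= n -> y i = y j -> i = j).

Definition k_quasi_transitive (V : finType) (A : rel V) (k : nat) : Prop :=
  forall y : nat -> V, is_path A y k -> adjacent A (y 0) (y k).

Definition strong (V : finType) (A : rel V) : Prop :=
  forall x y : V, connect A x y.

Definition has_path (V : finType) (A : rel V) (x y : V) (n : nat) : Prop :=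
  exists p : nat -> V, [/\ p 0 = x, p n = y & is_path A p n].

Definition dist_eq (V : finType) (A : rel V) (x y : V) (n : nat) : Prop :=
  has_path A x y n /\ forall m, m < n -> ~ has_path A x y m.

Definition diam_ge (V : finType) (A : rel V) (n : nat) : Prop :=
  exists x y : V, forall m, m < n -> ~ has_path A x y m.

From mathcomp Require Import all_boot zify.
Set Implicit Arguments. Unset Strict Implicit. Unset Printing Implicit Defensive.

(* Index the vertices of P by 0..k+2 and write c -> d for the arc x_c -> x_d.
   As P is a shortest path it has no forward shortcut c -> d with c + 1 < d, so
   whenever D[V(P)] contains a path with k arcs from c to d, where d + 1 < c,
   k-quasi-transitivity forces the backward arc c -> d.  The paths used are runs
   of consecutive vertices of P joined by backward arcs.  With them one shows
   that every backward arc c -> d of odd length at least 3 exists; that a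
   backward arc of even length can be widened, two steps at each end, until it
   reaches an end of P, which yields k+2 -> 1; and that k+2 -> 1 in turn yields
   every backward arc c -> d with d + 1 < c. *)

Section PathIndices.

Variables (V : finType) (A : rel V) (x : nat -> V) (n : nat).
Hypothesis x_path : is_path A x n.

Lemma is_path_shortcut i j : i.+1 < j <= n -> A (x i) (x j) ->
  has_path A (x 0) (x n) (n - (j - i.+1)).
Proof.
case: x_path => x_step x_inj lt_ij Aij.
pose skip m := if m <= i then m else m + (j - i.+1).
exists (x \o skip); split=> /=; first by rewrite /skip leq0n.
  by rewrite /skip ifF; [congr x | apply/negbTE]; lia.
split=> [m lt_m | m1 m2 le1 le2 e].
  rewrite /= /skip; case: (ltngtP m i) => [lt_mi | lt_im | ->].
  - by apply: x_step; lia.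
  - by rewrite addSn; apply: x_step; lia.
  - by rewrite (_ : i.+1 + _ = j) //; lia.
have := x_inj _ _ _ _ e; rewrite /skip.
by case: ifP; case: ifP; lia.
Qed.

Lemma quasi_transitive_walk k : k_quasi_transitive A k ->
  forall a s, size s = k -> uniq (a :: s) -> all (leq^~ n) (a :: s) ->
  path [rel i j | A (x i) (x j)] a s -> adjacent A (x a) (x (last a s)).
Proof.
move=> qt a s size_s uniq_s le_s walk_s; case: x_path => _ x_inj.
have := qt (fun m => x (nth a (a :: s) m)); rewrite /= -size_s -last_nth; apply.
split=> [m lt_m | m1 m2 le1 le2 e]; first by move/(pathP a): walk_s => /(_ m lt_m).
have le_nth m : m <= size s -> nth a (a :: s) m <= n.
  by move=> le_m; apply: (allP le_s); rewrite mem_nth.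
apply/eqP; rewrite -(nth_uniq a _ _ uniq_s) //.
by rewrite (x_inj _ _ (le_nth _ le1) (le_nth _ le2) e).
Qed.

End PathIndices.

(* [:: (c1, t1); (c2, t2); ...] encodes the walk c1, c1+1, ..., t1, c2, ..., t2, ... *)
Fixpoint block_walk (bs : seq (nat * nat)) : seq nat :=
  if bs is b :: bs' then iota b.1 (b.2 - b.1).+1 ++ block_walk bs' else [::].

Lemma size_block_walk bs : size (block_walk bs) = sumn [seq (b.2 - b.1).+1 | b <- bs].
Proof. by elim: bs => //= b bs IH; rewrite size_cat size_iota IH. Qed.

Lemma last_iota a m : last a (iota a.+1 m) = a + m.
Proof. by elim: m a => [|m IH] a /=; rewrite ?addn0 ?IH ?addnS. Qed.

Section BackwardArcs.

Variables (k : nat) (R : rel nat).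
Local Notation n := k.+2.

Hypothesis k_odd : odd k.
Hypothesis k_ge5 : 5 <= k.
Hypothesis R_step : forall i, i < n -> R i i.+1.
Hypothesis R_no_shortcut : forall i j, i.+1 < j <= n -> ~~ R i j.
Hypothesis R_walk_ends : forall a s, size s = k -> uniq (a :: s) ->
  all (leq^~ n) (a :: s) -> path R a s -> R a (last a s) || R (last a s) a.

Lemma path_iota a m : a + m <= n -> path R a (iota a.+1 m).
Proof. by elim: m a => //= m IH a le_amn; rewrite R_step ?IH //; lia. Qed.

Lemma arc_span i : i <= 2 -> R (i + k) i.
Proof.
move=> le_i2; have walk : path R i (iota i.+1 k) by apply: path_iota; lia.
have le_walk : all (leq^~ n) (iota i k.+1) by apply/allP => j; rewrite mem_iota; lia.
have no_fwd : ~~ R i (i + k) by apply: R_no_shortcut; lia.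
move: (R_walk_ends (size_iota _ _) (iota_uniq i k.+1) le_walk walk).
by rewrite last_iota (negbTE no_fwd).
Qed.

Definition block_link : rel (nat * nat) := fun b b' => (b'.2 < b.1) && R b.2 b'.1.

Lemma block_walkP c t bs : all (fun b => b.1 <= b.2) ((c, t) :: bs) ->
  path block_link (c, t) bs -> t <= n ->
  exists2 s, block_walk ((c, t) :: bs) = c :: s &
    [/\ path R c s, uniq (c :: s), all (leq^~ t) (c :: s)
      & last c s = (last (c, t) bs).2].
Proof.
have run_le lo hi : lo <= hi -> all (leq^~ hi) (iota lo (hi - lo).+1).
  by move=> le_lh; apply/allP => i; rewrite mem_iota; lia.
elim: bs c t => [|[c' t'] bs IH] c t.
  move=> /andP[/= le_ct _] _ le_tn; exists (iota c.+1 (t - c)); first by rewrite cats0.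
  split; [apply: path_iota; lia | exact: (iota_uniq c (t - c).+1) | exact: run_le |].
  by rewrite last_iota; lia.
move=> /and3P[le_ct le_ct' nonempty] /andP[/andP[lt_tc' Rtc'] linked] le_tn.
rewrite /= in le_ct lt_tc' Rtc'.
have [||s' walk_eq [walk' uniq' le' last']] := IH c' t' _ linked _; [exact/andP | lia |].
exists (iota c.+1 (t - c) ++ c' :: s'); first by rewrite -walk_eq.
split; last by rewrite last_cat.
- by rewrite cat_path last_iota subnKC //= Rtc' walk' path_iota //; lia.
- rewrite -cat_cons -/(iota c (t - c).+1) cat_uniq iota_uniq uniq' andbT.
  by apply/hasPn => i /(allP le'); rewrite mem_iota; lia.
- rewrite -cat_cons -/(iota c (t - c).+1) all_cat run_le //.
  by apply/allP => i /(allP le') /=; lia.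
Qed.

Lemma block_walk_arc c t bs : all (fun b => b.1 <= b.2) ((c, t) :: bs) ->
  path block_link (c, t) bs -> t <= n ->
  size (block_walk ((c, t) :: bs)) = k.+1 -> (last (c, t) bs).2.+1 < c ->
  R c (last (c, t) bs).2.
Proof.
move=> nonempty linked le_tn size_walk.
have [s walk_eq [walk uniq_s le_s <-]] := block_walkP nonempty linked le_tn.
have le_walk : all (leq^~ n) (c :: s).
  by apply/allP => i /(allP le_s) le_it; apply: leq_trans le_tn.
move=> lt_last; have no_fwd : ~~ R (last c s) c.
  by apply: R_no_shortcut; rewrite lt_last (allP le_walk c) ?mem_head.
move: size_walk; rewrite walk_eq => -[size_s].
by move: (R_walk_ends size_s uniq_s le_walk walk); rewrite (negbTE no_fwd) orbF.
Qed.

(* Proves R c d from the walk given by the blocks (c, t) :: bs; the arcs joining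
   consecutive blocks are left as goals unless they are hypotheses. *)
Tactic Notation "close_walk" constr(t) constr(bs) :=
  apply: (block_walk_arc (t := t) (bs := bs));
  rewrite ?size_block_walk /= /block_link /=;
  repeat (apply/andP; split); try done; try lia.

Lemma arc_wrap t e c d : e <= d -> d.+1 < c -> c <= t <= n -> t + d.+1 = k + c + e ->
  R t e -> R c d.
Proof. by move=> *; close_walk t [:: (e, d)]. Qed.

Lemma low_arc_step e y : e <= 1 -> 2 <= y -> y.+2 <= n -> R n 2 -> R y e -> R y.+2 e.
Proof. by move=> *; close_walk n [:: (2, y); (e, e)]. Qed.

Lemma top_arc_step c z : k < c <= n -> z.+2 <= k -> R k 0 -> R c z.+2 -> R c z.
Proof. by move=> *; close_walk c [:: (z.+2, k); (0, z)]. Qed.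

Lemma inner_arc e c d : e <= 2 -> e <= d -> d.+2 <= c <= k + e ->
  R (k + e) d.+1 -> R c.-1 e -> R c d.
Proof. by move=> *; close_walk (k + e) [:: (d.+1, c.-1); (e, d)]. Qed.

Lemma arc_widen a b m : b.+2 <= m < a -> a.+2 <= n ->
  R n m.+1 -> R m 0 -> R a b.+2 -> R a.+2 b.
Proof. by move=> *; close_walk n [:: (m.+1, a); (b.+2, m); (0, b)]. Qed.

Lemma arc_shift : R n 4 -> R k.+1 0 -> R n 1.
Proof. by move=> *; close_walk n [:: (4, k.+1); (0, 1)]. Qed.


Lemma arc_k_0 : R k 0. Proof. exact: (@arc_span 0). Qed.

Lemma arc_n_2 : R n 2. Proof. exact: (@arc_span 2). Qed.

Lemma arc_n_0 : R n 0.
Proof. by apply: top_arc_step; [lia | lia | exact: arc_k_0 | exact: arc_n_2]. Qed.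

Lemma arc_3 d : d + 3 <= n -> R (d + 3) d.
Proof. by move=> le_dn; apply: (arc_wrap (t := n) (e := 0)); try lia; exact: arc_n_0. Qed.

Lemma low_arc_lift e y y' : e <= 1 -> e.+2 <= y <= y' -> y' <= n ->
  ~~ odd (y' - y) -> R y e -> R y' e.
Proof.
move=> le_e1 le_yy'; elim/ltn_ind: y' le_yy' => y' IH le_yy' le_y'n even_gap Rye.
have [-> // | ne_y'y] := eqVneq y' y.
rewrite (_ : y' = (y' - 2).+2); last lia.
by apply: low_arc_step; [lia | lia | lia | exact: arc_n_2 | apply: IH; lia].
Qed.

Lemma top_arc_lower c z z' : k < c <= n -> z <= z' <= k ->
  ~~ odd (z' - z) -> R c z' -> R c z.
Proof.
move=> lt_kc le_zz'; elim/ltn_ind: z' le_zz' => z' IH le_zz' even_gap Rcz'.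
have [<- // | ne_z'z] := eqVneq z' z.
apply: (IH (z' - 2)); try lia.
apply: top_arc_step; [lia | lia | exact: arc_k_0 |].
by rewrite (_ : (z' - 2).+2 = z') //; lia.
Qed.

Lemma odd_end_arc c d : d.+1 < c <= n -> odd (c - d) -> (d <= 1) || (k < c) ->
  R c d.
Proof.
move=> lt_dc odd_gap /orP[le_d1 | lt_kc].
  by apply: (low_arc_lift (y := d + 3)); try lia; apply: arc_3; lia.
apply: (top_arc_lower (z' := c - 3)); try lia.
by have := arc_3 (d := c - 3); rewrite subnK; [apply; lia | lia].
Qed.

Lemma arcs_of_end_arcs (with_even : bool) :
  (forall c d, d.+1 < c <= n -> with_even || odd (c - d) -> (d <= 1) || (k < c) ->
     R c d) ->
  forall c d, d.+1 < c <= n -> with_even || odd (c - d) -> R c d.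
Proof.
move=> end_arcs.
(* For even d the walk of [inner_arc] with e = 1 uses the arcs k+1 -> d+1, of odd
   length, and c-1 -> 1, of the length parity of c - d; for odd d, e = 2 gives
   n -> d+1, of odd length, and c-1 -> 2, an inner arc with even target. *)
have inner_even c d : ~~ odd d -> 2 <= d -> d.+1 < c <= k -> with_even || odd (c - d) ->
    R c d.
  by move=> *; apply: (inner_arc (e := 1)); try lia; apply: end_arcs; lia.
move=> c d lt_dc adm; have [at_end | inner] := boolP ((d <= 1) || (k < c)).
  exact: end_arcs.
have [d_even | d_odd] := boolP (~~ odd d); first by apply: inner_even; lia.
by apply: (inner_arc (e := 2)); try lia; [apply: end_arcs | apply: inner_even]; lia.
Qed.

Lemma odd_arc c d : d.+1 < c <= n -> odd (c - d) -> R c d.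
Proof.
move=> lt_dc odd_gap; apply: (arcs_of_end_arcs (with_even := false)) => // c' d' *.
by apply: odd_end_arc; lia.
Qed.

Lemma arcs_of_arc_n_1 : R n 1 -> forall c d, d.+1 < c <= n -> R c d.
Proof.
move=> R_n1.
have arc_2 d : 1 <= d -> d.+2 <= n -> R d.+2 d.
  by move=> *; apply: (arc_wrap (t := n) (e := 1)); lia.
have R_k1_0 : R k.+1 0.
  apply: top_arc_step; [lia | lia | exact: arc_k_0 |].
  apply: (inner_arc (e := 1)); [lia | lia | lia | apply: odd_arc; lia |].
  by apply: (low_arc_lift (y := 3)); try lia; apply: arc_2; lia.
have arc_2_low e : e <= 1 -> R e.+2 e.
  move=> le_e1; have [-> | ->] : e = 0 \/ e = 1 by lia.
    by apply: (arc_wrap (t := k.+1) (e := 0)); lia.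
  by apply: arc_2; lia.
have end_arcs c d : d.+1 < c <= n -> true || odd (c - d) -> (d <= 1) || (k < c) ->
    R c d.
  move=> lt_dc _ at_end; have [odd_gap | even_gap] := boolP (odd (c - d)).
    exact: odd_arc.
  case/orP: at_end => [le_d1 | lt_kc].
    by apply: (low_arc_lift (y := d.+2)); try lia; apply: arc_2_low; lia.
  apply: (top_arc_lower (z' := c - 2)); try lia.
  by have := arc_2 (c - 2); rewrite (_ : (c - 2).+2 = c); [apply; lia | lia].
by move=> c d lt_dc; apply: (arcs_of_end_arcs end_arcs).
Qed.

Lemma arc_n_1_of_even_arc a b : b.+1 < a <= n -> ~~ odd (a - b) -> R a b -> R n 1.
Proof.
have shift : R k.+1 0 -> R n 1 by apply: arc_shift; apply: odd_arc; lia.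
elim/ltn_ind: b a => b IH a lt_ba even_gap Rab.
have [le_b1 | lt_1b] := leqP b 1.
  have [|] : b = 0 \/ b = 1 by lia.
    by move=> b0; subst b; apply: shift; apply: (low_arc_lift (y := a)) => //; lia.
  by move=> b1; subst b; apply: (low_arc_lift (y := a)) => //; lia.
have [lt_ka | le_ak] := ltnP k a.
  have [|] : a = k.+1 \/ a = n by lia.
    by move=> ak1; subst a; apply: shift; apply: (top_arc_lower (z' := b)) => //; lia.
  by move=> an; subst a; apply: (top_arc_lower (z' := b)) => //; lia.
(* With m odd, n -> m+1 and m -> 0 are arcs of odd length. *)
have [m [odd_m le_bm le_mb]] : exists m, [/\ odd m, b <= m & m <= b.+1].
  by case: (boolP (odd b)) => odd_b; [exists b | exists b.+1]; split; lia.
apply: (IH (b - 2) _ a.+2); try lia.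
apply: (arc_widen (m := m)); try lia; try (apply: odd_arc; lia).
by rewrite (_ : (b - 2).+2 = b) //; lia.
Qed.

Theorem backward_arcs_of_even_arc a b : b.+1 < a <= n -> ~~ odd (a - b) -> R a b ->
  forall c d, d.+1 < c <= n -> R c d.
Proof. by move=> lt_ba even_gap Rab; apply/arcs_of_arc_n_1/(arc_n_1_of_even_arc lt_ba). Qed.

End BackwardArcs.

Theorem lemma2p4 (V : finType) (A : rel V) (k : nat)
  (hirr : irreflexive A)
  (hk_odd : odd k) (hk5 : 5 <= k)
  (hqt : k_quasi_transitive A k) (hstrong : strong A)
  (hdiam : diam_ge A (k + 2))
  (u v : V) (huv : dist_eq A u v (k + 2))
  (x : nat -> V) (hx0 : x 0 = u) (hxv : x (k + 2) = v)
  (hP : is_path A x (k + 2))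
  (hpar : exists i j, [/\ i <= k + 2, j <= k + 2, i <> j, odd i = odd j
                        & adjacent A (x i) (x j)]) :
  (forall i j, i <= k + 2 -> j <= k + 2 -> i <> j -> adjacent A (x i) (x j)) /\
  (forall s t, s <= k + 2 -> t.+1 < s -> A (x s) (x t)).
Proof.
rewrite addn2 in huv hxv hP hpar *.
pose R := [rel i j | A (x i) (x j)].
have R_step i : i < k.+2 -> R i i.+1 by case: hP => step _; apply: step.
have no_shortcut i j : i.+1 < j <= k.+2 -> ~~ R i j.
  move=> lt_ij; apply/negP => Aij; apply: (huv.2 (k.+2 - (j - i.+1))); first lia.
  by rewrite -hx0 -hxv; apply: is_path_shortcut.
have walk_ends a s : size s = k -> uniq (a :: s) -> all (leq^~ k.+2) (a :: s) ->
    path R a s -> R a (last a s) || R (last a s) a.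
  by move=> *; apply/orP; apply: (quasi_transitive_walk hP hqt).
have backward c d : d.+1 < c <= k.+2 -> R c d.
  have [i [j [le_i le_j ne_ij par_ij adj_ij]]] := hpar.
  wlog lt_ij : i j le_i le_j ne_ij par_ij adj_ij / i < j.
    move=> gen; have [lt_ij | lt_ji | eq_ij] := ltngtP i j; last by [].
      exact: (gen i j).
    by apply: (gen j i) => //; [lia | case: adj_ij; [right | left]].
  have Rji : R j i.
    case: adj_ij => // Aij; have : i.+1 < j <= k.+2 by lia.
    by move/no_shortcut; rewrite /= Aij.
  have := backward_arcs_of_even_arc hk_odd hk5 R_step no_shortcut walk_ends (a := j) (b := i).
  by apply=> //; lia.
split=> [i j le_i le_j ne_ij | s t le_s lt_ts]; last by apply: backward; lia.
have [lt | gt | //] := ltngtP i j.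
- have [-> | ne] := eqVneq j i.+1; [left; apply: R_step | right; apply: backward]; lia.
- have [-> | ne] := eqVneq i j.+1; [right; apply: R_step | left; apply: backward]; lia.
Qed.
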